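(* Under the setup, the window-coverage condition and nonsingular Gram matrix described in the context, and the DDD parallel changes-in-trends assumption, the population coefficient $\alpha_j$ ($j\in\mathcal E$) in the regression $$Y_{i,t}=\alpha_i+\delta_{S_i,t}+\eta_{Q_i,t}+\sum_{e\in\mathcal E}\alpha_eR_e(i,t)+\varepsilon_{i,t}$$ satisfies $$\alpha_j=\sum_{g\in\mathcal G_{\mathrm{trg}}}\sum_{\ell\in\{-L,\dots,K\}\setminus\{-1\}}\omega^{j,\star}_{g,\ell}\,\mathrm{CATT}(g,\ell).$$
   Context: Setup: balanced panel of units $i$ over $t\in\{1,\dots,T\}$; treatment-enabling group $S_i\in\mathcal S\subseteq\{2,\dots,T\}\cup\{\infty\}$; time-invariant eligibility $Q_i\in\{0,1\}$; $\mathcal G_{\mathrm{trg}}=\mathcal S\setminus\{\infty\}$. Potential outcomes $Y_{i,t}(g)$, $g\in\mathcal G_{\mathrm{trg}}$, and $Y_{i,t}(\infty)$, with convention $Y_{i,t}(g)=Y_{i,t}(\infty)$ for $t<g$. Observed outcome: $Y_{i,t}=Y_{i,t}(g)$ if $S_i=g\in\mathcal G_{\mathrm{trg}}$ and $Q_i=1$, and $Y_{i,t}=Y_{i,t}(\infty)$ otherwise. Data i.i.d. across units with finite second moments. $\mathrm{CATT}(g,e)=\mathbb E[Y_{i,g+e}(g)-Y_{i,g+e}(\infty)\mid S_i=g,Q_i=1]$. $\mathcal E=\{-L,\dots,K\}\setminus\{-1\}$; the window covers all event times ($t-g\in\{-L,\dots,K\}$ for all $g\in\mathcal G_{\mathrm{trg}}$,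 $t\in\{1,\dots,T\}$). $R_e(i,t)=\mathbb 1\{t-S_i=e\}Q_i$, $R_{g,\ell}(i,t)=\mathbb 1\{S_i=g,Q_i=1,t=g+\ell\}$. Population coefficients are least-squares projections over units and periods; the Gram matrix of the three-way demeaned (unit, group-by-time, eligibility-by-time) event-time indicators is nonsingular. $\omega^{j,\star}_{g,\ell}$ is the coefficient on $R_j$ in the population regression of $R_{g,\ell}(i,t)$ on $\alpha_i$, $\delta_{S_i,t}$, $\eta_{Q_i,t}$ and $\{R_e\}_{e\in\mathcal E}$. DDD-PCT: for all $g\in\mathcal G_{\mathrm{trg}}$, all $g_c\in\mathcal S$ with $g_c>g$, and all $t\in\{2,\dots,T\}$ with $t\le g_c$, writing $\Delta_t(s,q)=\mathbb E[Y_{i,t}(\infty)-Y_{i,t-1}(\infty)\mid S_i=s,Q_i=q]$, one has $\Delta_t(g,1)-\Delta_t(g,0)=\Delta_t(g_c,1)-\Delta_t(g_c,0)$. *)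

From HB Require Import structures.
From mathcomp Require Import all_boot all_order all_algebra.
From mathcomp Require Import all_classical all_reals all_analysis.

Set Implicit Arguments.
Unset Strict Implicit.
Unset Printing Implicit Defensive.

Import Order.TTheory GRing.Theory Num.Theory.
Local Open Scope classical_set_scope.
Local Open Scope ring_scope.

(* Conventions:
   - treatment-enabling groups are [option nat]: [Some g] is group g,
     [None] is the never-enabled group "infinity";
   - eligibility Q is a bool;
   - periods and event times are integers; periods are 1..T;
   - the population is a probability space (Omega, P): one draw = one unit
     (units are i.i.d.), and population moments are expectations under P
     summed over the periods t = 1..T. *)

Section DDD.
Context {d : measure_display} {Omega : measurableType d} {R : realType}.
Variable (P : probability Omega R).
Variables (T L K : nat) (S : Omega -> option nat) (Q : Omega -> bool).

Definition periods : seq int := [seq (k.+1)%:Z | k <- iota 0 T].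

Definition evs : seq int :=
  [seq e <- [seq (k%:Z - L%:Z) | k <- iota 0 (L + K).+1] | e != -1].

Definition Gtrg (Sset : seq (option nat)) : seq nat := undup (pmap id Sset).

Definition Re (e : int) (t : int) (w : Omega) : R :=
  if S w is Some g then ((t - g%:Z == e) && Q w)%:R else 0.

Definition Rgl (g : nat) (l : int) (t : int) (w : Omega) : R :=
  [&& S w == Some g, Q w & t == g%:Z + l]%:R.

Definition adm_fe (a : Omega -> R) : Prop := a \in Lfun P 2%:E.

Definition fefit (a : Omega -> R) (dl : option nat -> int -> R)
  (et : bool -> int -> R) : int -> Omega -> R :=
  fun t w => a w + dl (S w) t + et (Q w) t.

Definition regfit a dl et (al : int -> R) : int -> Omega -> R :=
  fun t w => fefit a dl et t w + \sum_(e <- evs) al e * Re e t w.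

Definition sqloss (Yv fit : int -> Omega -> R) : \bar R :=
  'E_P[fun w => \sum_(t <- periods) (Yv t w - fit t w) ^+ 2].

Definition pop_coef (Yv : int -> Omega -> R) (al : int -> R) : Prop :=
  exists a dl et, adm_fe a /\
    forall a' dl' et' al', adm_fe a' ->
      (sqloss Yv (regfit a dl et al) <= sqloss Yv (regfit a' dl' et' al'))%E.

Definition three_way_demeaned (Yv Yt : int -> Omega -> R) : Prop :=
  exists a dl et, adm_fe a /\
    (forall a' dl' et', adm_fe a' ->
       (sqloss Yv (fefit a dl et) <= sqloss Yv (fefit a' dl' et'))%E) /\
    forall t w, Yt t w = Yv t w - fefit a dl et t w.

Definition gram (Rt : int -> int -> Omega -> R) : 'M[R]_(size evs) :=
  \matrix_(i, j) fine 'E_P[fun w => \sum_(t <- periods)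
        Rt (nth 0 evs i) t w * Rt (nth 0 evs j) t w].

Definition gram_nonsingular : Prop :=
  exists Rt : int -> int -> Omega -> R,
    (forall e, e \in evs -> three_way_demeaned (Re e) (Rt e)) /\
    gram Rt \in unitmx.

Definition cellP (s : option nat) (q : bool) : \bar R :=
  P [set w | S w = s /\ Q w = q].

Definition condexp (X : Omega -> R) (s : option nat) (q : bool) : R :=
  fine 'E_P[fun w => X w * ((S w == s) && (Q w == q))%:R] / fine (cellP s q).

(* potential outcomes: Y (Some g) t = Y_t(g), Y None t = Y_t(infinity) *)
Definition Yobs (Y : option nat -> int -> Omega -> R) (t : int) (w : Omega) : R :=
  if S w is Some g then (if Q w then Y (Some g) t w else Y None t w)
  else Y None t w.

Definition CATT (Y : option nat -> int -> Omega -> R) (g : nat) (e : int) : R :=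
  condexp (fun w => Y (Some g) (g%:Z + e) w - Y None (g%:Z + e) w) (Some g) true.

Definition Delta (Y : option nat -> int -> Omega -> R) (t : int)
  (s : option nat) (q : bool) : R :=
  condexp (fun w => Y None t w - Y None (t - 1) w) s q.

Definition later (gc : option nat) (g : nat) : bool :=
  if gc is Some c then (g < c)%N else true.

Definition le_grp (t : int) (gc : option nat) : bool :=
  if gc is Some c then t <= c%:Z else true.

Definition DDD_PCT (Sset : seq (option nat)) (Y : option nat -> int -> Omega -> R)
  : Prop :=
  forall (g : nat) (gc : option nat) (t : int),
    g \in Gtrg Sset -> gc \in Sset -> later gc g ->
    2 <= t <= T%:Z -> le_grp t gc ->
    Delta Y t (Some g) true - Delta Y t (Some g) false =
    Delta Y t gc true - Delta Y t gc false.

End DDD.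

From Pilot Require Import Defs.
From HB Require Import structures.
From mathcomp Require Import all_boot all_order all_algebra.
From mathcomp Require Import all_classical all_reals all_analysis measurable_realfun.
From mathcomp Require Import ring lra zify.

Import Order.TTheory GRing.Theory Num.Theory.
Local Open Scope classical_set_scope.
Local Open Scope ring_scope.

(* The coefficient on [R_j] is pinned down, through the nonsingular Gram matrix,
   by the inner products [<Rt_i, Y>] of the outcome with the three-way demeaned
   event-time indicators [Rt_i] (Frisch-Waugh-Lovell).  Each [Rt_i] is a function
   of (S, Q, t) minus a unit effect and is orthogonal to all unit effects, so it
   only sees cell means: [<Rt_i, Z> = <Rt_i, E[Z | S, Q]>].  Write the observed
   outcome as [Y(inf) + sum_(g,l) R_(g,l) (Y(g) - Y(inf))].  By parallel trends
   against the never-enabled group the cell means of [Y(inf)] form a fixed-effects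
   fit, so [<Rt_i, Y(inf)> = 0]; the cell mean of [R_(g,l) (Y(g) - Y(inf))] is
   [CATT(g,l) R_(g,l)].  Hence [<Rt_i, Y> = sum_(g,l) CATT(g,l) <Rt_i, R_(g,l)>],
   and expanding [<Rt_i, R_(g,l)>] the same way yields the weights [omega]. *)

(** * Square-integrable random variables *)

Section Lfun_closure.
Context {d : measure_display} {Omega : measurableType d} {R : realType}.
Context {P : probability Omega R} {p : \bar R}.
Variable p1 : (1 <= p)%E.

Lemma Lfun0 : (fun _ : Omega => 0 : R) \in Lfun P p.
Proof. by have [] := Lfun_submod_closed P p1. Qed.

Lemma Lfun_lin (k : R) {f g : Omega -> R} :
  f \in Lfun P p -> g \in Lfun P p -> (fun x => k * f x + g x) \in Lfun P p.
Proof. by have [_] := Lfun_submod_closed P p1; apply. Qed.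

Lemma LfunZ (k : R) {f : Omega -> R} :
  f \in Lfun P p -> (fun x => k * f x) \in Lfun P p.
Proof.
move=> hf; suff -> : (fun x => k * f x) = (fun x => k * f x + 0)
  by exact: (Lfun_lin _ hf Lfun0).
by apply/funext => x; rewrite addr0.
Qed.

Lemma LfunN {f : Omega -> R} : f \in Lfun P p -> (fun x => - f x) \in Lfun P p.
Proof.
move=> hf; suff -> : (fun x => - f x) = (fun x => -1 * f x) by exact: LfunZ.
by apply/funext => x; rewrite mulN1r.
Qed.

Lemma LfunD {f g : Omega -> R} :
  f \in Lfun P p -> g \in Lfun P p -> (fun x => f x + g x) \in Lfun P p.
Proof.
move=> hf hg; suff -> : (fun x => f x + g x) = (fun x => 1 * f x + g x)
  by exact: Lfun_lin.
by apply/funext => x; rewrite mul1r.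
Qed.

Lemma LfunB {f g : Omega -> R} :
  f \in Lfun P p -> g \in Lfun P p -> (fun x => f x - g x) \in Lfun P p.
Proof.
move=> hf hg; suff -> : (fun x => f x - g x) = (fun x => -1 * g x + f x)
  by exact: Lfun_lin.
by apply/funext => x; rewrite mulN1r addrC.
Qed.

Lemma Lfun_sum {I : eqType} (s : seq I) (F : I -> Omega -> R) :
  (forall i, i \in s -> F i \in Lfun P p) ->
  (fun x => \sum_(i <- s) F i x) \in Lfun P p.
Proof.
elim: s => [|i s IH] hF.
  by under eq_fun do rewrite big_nil; exact: Lfun0.
under eq_fun do rewrite big_cons.
by apply: LfunD; [apply: hF; rewrite mem_head|apply: IH => j js; rewrite hF// inE js orbT].
Qed.

End Lfun_closure.

Section Lfun_probability.
Context {d : measure_display} {Omega : measurableType d} {R : realType}.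
Variable P : probability Omega R.

Lemma Lfun_dominated (r : R) {f g : Omega -> R} : 0 < r ->
  measurable_fun setT f -> g \in Lfun P r%:E ->
  (forall x, `|f x| <= `|g x|) -> f \in Lfun P r%:E.
Proof.
move=> r0 mf /andP[]; rewrite !inE => mg Ng fg.
apply/andP; split; rewrite inE //; apply: le_lt_trans _ Ng.
rewrite unlock gt0_ler_poweR ?in_itv/= ?leey ?integral_ge0//; first by rewrite invr_ge0 ltW.
have m_pow (h : Omega -> R) : measurable_fun setT h ->
    measurable_fun setT (EFin \o (fun x => `|h x| `^ r)).
  move=> mh; apply/measurable_EFinP.
  by apply: (@measurableT_comp _ _ _ _ _ _ (fun x : R => x `^ r)) => //;
    exact: measurableT_comp.
refine (ge0_le_integral P measurableT _ (m_pow _ mf) (m_pow _ mg) _) => x _.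
  by rewrite /comp lee_fin powR_ge0.
by rewrite /comp lee_fin ge0_ler_powR ?nnegrE ?fg// ltW.
Qed.

Lemma Lfun_bool (r : R) (b : Omega -> bool) : 0 < r ->
  measurable [set w | b w] -> (fun w => (b w)%:R : R) \in Lfun P r%:E.
Proof.
move=> r0 mb; apply: (Lfun_dominated r r0 _ (Lfun_cst P 1 r)).
  rewrite (_ : (fun w => _) = \1_[set w | b w]); first exact: measurable_indic.
  apply/funext => w; rewrite /indic (_ : (w \in _) = b w)//.
  by apply/idP/idP => [/set_mem|/mem_set].
by move=> w; case: (b w); rewrite ?normr1 ?normr0.
Qed.

Lemma Lfun_boolM (r : R) (b : Omega -> bool) (f : Omega -> R) : 0 < r ->
  measurable [set w | b w] -> f \in Lfun P r%:E ->
  (fun w => (b w)%:R * f w) \in Lfun P r%:E.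
Proof.
move=> r0 mb hf; apply: (Lfun_dominated r r0 _ hf); last first.
  by move=> w; case: (b w); rewrite ?mul1r ?mul0r ?normr0.
have /andP[mbR _] := Lfun_bool r b r0 mb; have /andP[mf _] := hf.
by rewrite !inE in mbR mf; exact: measurable_funM.
Qed.

Lemma Lfun2_Lfun1 (f : Omega -> R) : f \in Lfun P 2%:E -> f \in Lfun P 1.
Proof. by apply: Lfun_subset12; rewrite fin_num_measure. Qed.

End Lfun_probability.

Definition mean {d : measure_display} {Omega : measurableType d} {R : realType}
  (P : probability Omega R) (X : Omega -> R) : R := fine 'E_P[X].

Section Mean.
Context {d : measure_display} {Omega : measurableType d} {R : realType}.
Context {P : probability Omega R}.
Local Notation mean := (mean P).

Lemma eq_mean {X Y : Omega -> R} : X =1 Y -> mean X = mean Y.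
Proof. by move=> /funext->. Qed.

Lemma mean_cst (c : R) : mean (fun _ => c) = c.
Proof. by rewrite /mean (_ : (fun _ => c) = cst c)// expectation_cst. Qed.

Lemma mean_ge0 (X : Omega -> R) : (forall w, 0 <= X w) -> 0 <= mean X.
Proof. by move=> X0; rewrite fine_ge0// expectation_ge0. Qed.

Lemma meanD (X Y : Omega -> R) : X \in Lfun P 1 -> Y \in Lfun P 1 ->
  mean (fun w => X w + Y w) = mean X + mean Y.
Proof. by move=> hX hY; rewrite /mean expectationD// fineD// expectation_fin_num. Qed.

Lemma meanZ (k : R) (X : Omega -> R) : X \in Lfun P 1 ->
  mean (fun w => k * X w) = k * mean X.
Proof.
move=> hX; rewrite /mean (_ : (fun w => _) = k \o* X); last first.
  by apply/funext => w; rewrite /= mulrC.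
by rewrite expectationZl// fineM// expectation_fin_num.
Qed.

Lemma meanB (X Y : Omega -> R) : X \in Lfun P 1 -> Y \in Lfun P 1 ->
  mean (fun w => X w - Y w) = mean X - mean Y.
Proof. by move=> hX hY; rewrite /mean expectationB// fineB// expectation_fin_num. Qed.

Lemma mean_sum (I : eqType) (s : seq I) (F : I -> Omega -> R) :
  (forall i, i \in s -> F i \in Lfun P 1) ->
  mean (fun w => \sum_(i <- s) F i w) = \sum_(i <- s) mean (F i).
Proof.
elim: s => [|i s IH] hF; first by under eq_mean do rewrite big_nil; rewrite mean_cst big_nil.
have hs j : j \in s -> F j \in Lfun P 1 by move=> js; rewrite hF// inE js orbT.
under eq_mean do rewrite big_cons.
by rewrite meanD ?big_cons ?IH ?hF ?mem_head// Lfun_sum.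
Qed.

End Mean.

(** * Panels and the least-squares inner product *)

Lemma eq0_of_quadratic_ge0 (R : realFieldType) (A B : R) :
  0 <= B -> (forall s, 0 <= s ^+ 2 * B - 2 * s * A) -> A = 0.
Proof.
move=> B0 H; have B1 : B + 1 != 0 by rewrite gt_eqF// ltr_wpDl.
pose s := A / (B + 1); have As : A = s * (B + 1) by rewrite divfK.
suff s0 : s = 0 by rewrite As s0 mul0r.
have := H s; rewrite As => hs.
apply/eqP; rewrite -sqrf_eq0 eq_le sqr_ge0 andbT; nra.
Qed.

Section Panel.
Context {d : measure_display} {Omega : measurableType d} {R : realType}.
Variables (P : probability Omega R) (T : nat).

Definition panel_L2 (X : int -> Omega -> R) : Prop :=
  forall t, t \in periods T -> X t \in Lfun P 2%:E.

Definition pdot (X Z : int -> Omega -> R) : R :=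
  \sum_(t <- periods T) mean P (fun w => X t w * Z t w).

End Panel.

Section Panel_inner_product.
Context {d : measure_display} {Omega : measurableType d} {R : realType}.
Context {P : probability Omega R} {T : nat}.
Local Notation panel_L2 := (panel_L2 P T).
Local Notation pdot := (pdot P T).

Lemma panel_L2D {X Z} : panel_L2 X -> panel_L2 Z -> panel_L2 (fun t w => X t w + Z t w).
Proof. by move=> hX hZ t ht; apply: (LfunD (lee1n 2)); [apply: hX|apply: hZ]. Qed.

Lemma panel_L2B {X Z} : panel_L2 X -> panel_L2 Z -> panel_L2 (fun t w => X t w - Z t w).
Proof. by move=> hX hZ t ht; apply: (LfunB (lee1n 2)); [apply: hX|apply: hZ]. Qed.

Lemma panel_L2Z k {X} : panel_L2 X -> panel_L2 (fun t w => k * X t w).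
Proof. by move=> hX t ht; apply: (LfunZ (lee1n 2)); apply: hX. Qed.

Lemma panel_L2_sum {I : eqType} {s : seq I} {F : I -> int -> Omega -> R} :
  (forall i, i \in s -> panel_L2 (F i)) -> panel_L2 (fun t w => \sum_(i <- s) F i t w).
Proof. by move=> hF t ht; apply: (Lfun_sum (lee1n 2)) => i hi; apply: hF. Qed.

Lemma eq_panel_L2 {X Z} : panel_L2 Z ->
  (forall t, t \in periods T -> X t =1 Z t) -> panel_L2 X.
Proof. by move=> hZ XZ t ht; rewrite (funext (XZ t ht)); apply: hZ. Qed.

Lemma pdotC X Z : pdot X Z = pdot Z X.
Proof. by apply: eq_bigr => t _; apply: eq_mean => w; rewrite mulrC. Qed.

Lemma eq_pdotr X {Z Z'} : (forall t, t \in periods T -> Z t =1 Z' t) ->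
  pdot X Z = pdot X Z'.
Proof. by move=> ZZ'; apply: eq_big_seq => t ht; apply: eq_mean => w; rewrite ZZ'. Qed.

Lemma eq_pdotl {X X'} Z : (forall t, t \in periods T -> X t =1 X' t) ->
  pdot X Z = pdot X' Z.
Proof. by move=> XX'; rewrite pdotC (eq_pdotr Z XX') pdotC. Qed.

Lemma pdot_ge0 X : 0 <= pdot X X.
Proof. by apply: sumr_ge0 => t _; apply: mean_ge0 => w; rewrite -expr2 sqr_ge0. Qed.

Section Linearity.
Variables (X : int -> Omega -> R) (hX : panel_L2 X).

Let L1_mul Z t : panel_L2 Z -> t \in periods T ->
  (fun w => X t w * Z t w) \in Lfun P 1.
Proof. by move=> hZ ht; apply: Lfun2_mul_Lfun1; [apply: hX|apply: hZ]. Qed.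

Lemma pdotDr Z1 Z2 : panel_L2 Z1 -> panel_L2 Z2 ->
  pdot X (fun t w => Z1 t w + Z2 t w) = pdot X Z1 + pdot X Z2.
Proof.
move=> h1 h2; rewrite /pdot -big_split; apply: eq_big_seq => t ht /=.
by under eq_mean do rewrite mulrDr; rewrite meanD// L1_mul.
Qed.

Lemma pdotBr Z1 Z2 : panel_L2 Z1 -> panel_L2 Z2 ->
  pdot X (fun t w => Z1 t w - Z2 t w) = pdot X Z1 - pdot X Z2.
Proof.
move=> h1 h2; rewrite /pdot -sumrB; apply: eq_big_seq => t ht /=.
by under eq_mean do rewrite mulrBr; rewrite meanB// L1_mul.
Qed.

Lemma pdotZr k Z : panel_L2 Z -> pdot X (fun t w => k * Z t w) = k * pdot X Z.
Proof.
move=> hZ; rewrite /pdot mulr_sumr; apply: eq_big_seq => t ht /=.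
by under eq_mean do rewrite mulrCA; rewrite meanZ// L1_mul.
Qed.

Lemma pdot_sumr (I : eqType) (s : seq I) (F : I -> int -> Omega -> R) :
  (forall i, i \in s -> panel_L2 (F i)) ->
  pdot X (fun t w => \sum_(i <- s) F i t w) = \sum_(i <- s) pdot X (F i).
Proof.
move=> hF; rewrite /pdot exchange_big; apply: eq_big_seq => t ht /=.
by under eq_mean do rewrite mulr_sumr; rewrite mean_sum// => i hi; apply: L1_mul => //; apply: hF.
Qed.

End Linearity.

Lemma sqloss_pdot (Yv fit : int -> Omega -> R) : panel_L2 Yv -> panel_L2 fit ->
  sqloss P T Yv fit =
  (pdot (fun t w => Yv t w - fit t w) (fun t w => Yv t w - fit t w))%:E.
Proof.
move=> hY hfit; set r := fun t w => _ - _; have hr : panel_L2 r by exact: panel_L2B.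
have r2 t : t \in periods T -> (fun w => r t w ^+ 2) \in Lfun P 1.
  by move=> ht; apply: Lfun2_mul_Lfun1; apply: hr.
rewrite /sqloss -(fineK (expectation_fin_num (Lfun_sum (lee1n 1) _ _ r2))).
by rewrite -/(mean P _) mean_sum.
Qed.

Lemma pdot_sqrB (X Z : int -> Omega -> R) (s : R) : panel_L2 X -> panel_L2 Z ->
  let Y := fun t w => X t w - s * Z t w in
  pdot Y Y = pdot X X - 2 * s * pdot X Z + s ^+ 2 * pdot Z Z.
Proof.
move=> hX hZ Y; have hsZ : panel_L2 (fun t w => s * Z t w) by exact: panel_L2Z.
have hY : panel_L2 Y by exact: panel_L2B.
rewrite pdotBr// pdotZr// !(pdotC Y) !pdotBr// !pdotZr//.
by rewrite (pdotC Z X); ring.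
Qed.

Lemma sqloss_min_orth (Yv fit h : int -> Omega -> R) :
  panel_L2 Yv -> panel_L2 fit -> panel_L2 h ->
  (forall s, (sqloss P T Yv fit <= sqloss P T Yv (fun t w => fit t w + s * h t w)%R)%E) ->
  pdot (fun t w => Yv t w - fit t w) h = 0.
Proof.
move=> hY hfit hh hmin; set r := fun t w => _ - _.
have hr : panel_L2 r by exact: panel_L2B.
apply: (@eq0_of_quadratic_ge0 _ _ (pdot h h) (pdot_ge0 h)) => s.
have hfsh := panel_L2D hfit (panel_L2Z s hh).
have := hmin s; rewrite !sqloss_pdot// -/r lee_fin.
have rsh t : t \in periods T -> (fun w => Yv t w - (fit t w + s * h t w)) =1
    (fun w => r t w - s * h t w) by move=> _ w; rewrite /r opprD addrA.
rewrite (eq_pdotl _ rsh) (eq_pdotr _ rsh) pdot_sqrB//.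
lra.
Qed.

End Panel_inner_product.

(** * Event times and (S, Q)-cells *)

Lemma sum_delta_seq (R : pzSemiRingType) (I : eqType) (s : seq I) (x : I)
    (F : I -> R) : uniq s ->
  \sum_(y <- s) (x == y)%:R * F y = (x \in s)%:R * F x.
Proof.
elim: s => [|y s IH]; first by rewrite big_nil in_nil mul0r.
rewrite cons_uniq => /andP[ys us]; rewrite big_cons IH// in_cons.
by case: eqP => [->|_]; rewrite ?(negbTE ys) /= ?mul0r ?addr0 ?add0r.
Qed.

Lemma mem_periods (T : nat) (t : int) : (t \in periods T) = (1 <= t <= T%:Z).
Proof.
apply/mapP/idP => [[k + ->]|]; first by rewrite mem_iota add0n; lia.
case: t => [n|//] nT; exists n.-1; first by rewrite mem_iota add0n; lia.
by congr Posz; lia.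
Qed.

Lemma size_periods (T : nat) : size (periods T) = T.
Proof. by rewrite size_map size_iota. Qed.

Lemma mem_evs (L K : nat) (x : int) :
  (x \in evs L K) = [&& - (L%:Z) <= x, x <= K%:Z & x != -1].
Proof.
rewrite mem_filter andbC andbA; congr andb.
apply/mapP/idP => [[k + ->]|xLK]; first by rewrite mem_iota add0n; lia.
by exists (absz (x + L%:Z)); [rewrite mem_iota add0n|]; lia.
Qed.

Lemma uniq_evs (L K : nat) : uniq (evs L K).
Proof.
rewrite filter_uniq// map_inj_uniq ?iota_uniq// => a b /eqP.
by rewrite subr_eq subrK => /eqP[].
Qed.

Lemma mem_Gtrg (Sset : seq (option nat)) (g : nat) : (g \in Gtrg Sset) = (Some g \in Sset).
Proof. by rewrite mem_undup mem_pmap map_id. Qed.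

Section Model.
Context {d : measure_display} {Omega : measurableType d} {R : realType}.
Variables (P : probability Omega R) (S : Omega -> option nat) (Q : Omega -> bool).
Variable Sset : seq (option nat).
Hypothesis hS : forall w, S w \in Sset.
Hypothesis hcell_meas : forall s q, measurable [set w | S w = s /\ Q w = q].

Definition in_cell (s : option nat) (q : bool) (w : Omega) : bool :=
  (S w == s) && (Q w == q).

Lemma measurable_in_cell s q : measurable [set w | in_cell s q w].
Proof.
rewrite (_ : [set w | _] = [set w | S w = s /\ Q w = q]); first exact: hcell_meas.
apply/seteqP; split => w; rewrite /= /in_cell; first by move=> /andP[/eqP-> /eqP->].
by case=> -> ->; rewrite !eqxx.
Qed.

Lemma Lfun_in_cellM r s q (X : Omega -> R) : 0 < r -> X \in Lfun P r%:E ->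
  (fun w => (in_cell s q w)%:R * X w) \in Lfun P r%:E.
Proof. by move=> r0; apply: Lfun_boolM => //; exact: measurable_in_cell. Qed.

Lemma cell_fun_decomp (f : option nat -> bool -> R) w :
  f (S w) (Q w) =
  \sum_(s <- undup Sset) \sum_(q <- [:: true; false]) f s q * (in_cell s q w)%:R.
Proof.
have cell_eq s q : (in_cell s q w)%:R = (S w == s)%:R * (Q w == q)%:R :> R.
  by rewrite /in_cell; case: (S w == s); case: (Q w == q); rewrite ?mul1r ?mul0r.
transitivity (\sum_(s <- undup Sset) (S w == s)%:R * f s (Q w)).
  by rewrite sum_delta_seq ?undup_uniq// mem_undup hS mul1r.
apply: eq_bigr => s _.
rewrite (eq_bigr (fun q => (Q w == q)%:R * ((S w == s)%:R * f s q))) => [|q _].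
  by rewrite sum_delta_seq// (_ : Q w \in _) ?mul1r//; case: (Q w).
by rewrite cell_eq; ring.
Qed.

Lemma cell_funM_decomp (f : option nat -> bool -> R) (X : Omega -> R) w :
  f (S w) (Q w) * X w = \sum_(s <- undup Sset) \sum_(q <- [:: true; false])
    f s q * ((in_cell s q w)%:R * X w).
Proof.
rewrite cell_fun_decomp mulr_suml; apply: eq_bigr => s _.
by rewrite mulr_suml; apply: eq_bigr => q _; rewrite mulrA.
Qed.

Lemma Lfun_cellM r (f : option nat -> bool -> R) (X : Omega -> R) :
  1 <= r -> X \in Lfun P r%:E -> (fun w => f (S w) (Q w) * X w) \in Lfun P r%:E.
Proof.
move=> r1 hX; have r1E : (1 <= r%:E)%E by rewrite lee_fin.
rewrite (funext (cell_funM_decomp f X)).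
apply: (Lfun_sum r1E) => s _; apply: (Lfun_sum r1E) => q _.
by apply: (LfunZ r1E); apply: Lfun_in_cellM; rewrite ?(lt_le_trans ltr01).
Qed.

Lemma Lfun_cell (f : option nat -> bool -> R) :
  (fun w => f (S w) (Q w)) \in Lfun P 2%:E.
Proof.
suff -> : (fun w => f (S w) (Q w)) = (fun w => f (S w) (Q w) * cst 1 w :> R).
  exact: (Lfun_cellM 2 f _ (ler1n R 2) (Lfun_cst P 1 2)).
by apply/funext => w; rewrite mulr1.
Qed.

Lemma mean_cellM (f : option nat -> bool -> R) (X : Omega -> R) : X \in Lfun P 1 ->
  mean P (fun w => f (S w) (Q w) * X w) = \sum_(s <- undup Sset)
    \sum_(q <- [:: true; false]) f s q * mean P (fun w => (in_cell s q w)%:R * X w).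
Proof.
move=> hX; have hcX s q : (fun w => (in_cell s q w)%:R * X w) \in Lfun P 1.
  exact: Lfun_in_cellM.
rewrite (eq_mean (cell_funM_decomp f X)) mean_sum => [|s _]; last first.
  by apply: (Lfun_sum (lee1n 1)) => q _; exact: LfunZ.
apply: eq_bigr => s _; rewrite mean_sum => [|q _]; last exact: LfunZ.
by apply: eq_bigr => q _; rewrite meanZ.
Qed.

Lemma mean_in_cell s q : mean P (fun w => (in_cell s q w)%:R) = fine (cellP P S Q s q).
Proof.
rewrite /mean (_ : (fun w => _) = \1_[set w | S w = s /\ Q w = q]) ?expectation_indic//.
apply/funext => w; rewrite /indic /in_cell.
case: (boolP (w \in _)) => [/set_mem[-> ->]|/negP hw]; rewrite ?eqxx//.
by case: (S w =P s) => // Sw; case: (Q w =P q) => // Qw; case: hw; apply/mem_set.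
Qed.

Lemma condexpE (X : Omega -> R) s q : (0 < cellP P S Q s q)%E ->
  condexp P S Q X s q * fine (cellP P S Q s q) = mean P (fun w => (in_cell s q w)%:R * X w).
Proof.
move=> hpos; rewrite /condexp divfK; last first.
  by rewrite gt_eqF// fine_gt0// hpos (le_lt_trans (probability_le1 P (hcell_meas s q))) ?ltry.
by apply: eq_mean => w; rewrite mulrC.
Qed.

Lemma condexpB (X Y : Omega -> R) s q : X \in Lfun P 1 -> Y \in Lfun P 1 ->
  condexp P S Q (fun w => X w - Y w) s q = condexp P S Q X s q - condexp P S Q Y s q.
Proof.
move=> hX hY; rewrite /condexp -!/(mean P _) -mulrBl; congr (_ / _).
have hc Z : Z \in Lfun P 1 -> (fun w => Z w * (in_cell s q w)%:R) \in Lfun P 1.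
  by move=> hZ; under eq_fun do rewrite mulrC; exact: Lfun_in_cellM.
by rewrite -meanB ?hc//; apply: eq_mean => w; rewrite mulrBl.
Qed.

Lemma condexp_cellM (f : option nat -> bool -> R) (X : Omega -> R) s q :
  X \in Lfun P 1 ->
  condexp P S Q (fun w => f (S w) (Q w) * X w) s q = f s q * condexp P S Q X s q.
Proof.
move=> hX; rewrite /condexp -!/(mean P _) mulrA -meanZ; last first.
  by under eq_fun do rewrite mulrC; exact: Lfun_in_cellM.
congr (_ / _); apply: eq_mean => w; rewrite /in_cell.
by case: (S w =P s) => [->|]; case: (Q w =P q) => [->|]; rewrite ?mulr0 ?mulrA.
Qed.

Lemma mean_cellM_condexp (f : option nat -> bool -> R) (X : Omega -> R) :
  (forall s q, s \in Sset -> (0 < cellP P S Q s q)%E) -> X \in Lfun P 1 ->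
  mean P (fun w => f (S w) (Q w) * X w) =
  mean P (fun w => f (S w) (Q w) * condexp P S Q X (S w) (Q w)).
Proof.
move=> hpos hX; rewrite [RHS](eq_mean (Y := fun w =>
  (fun s q => f s q * condexp P S Q X s q) (S w) (Q w) * cst 1 w)); last first.
  by move=> w; rewrite mulr1.
rewrite mean_cellM// (mean_cellM (fun s q => f s q * condexp P S Q X s q)) ?Lfun_cst//.
apply: eq_big_seq => s; rewrite mem_undup => hs.
apply: eq_bigr => q _; rewrite -condexpE ?hpos// -mean_in_cell.
by rewrite mulrA; congr (_ * _); apply: eq_mean => w; rewrite mulr1.
Qed.

Variables T L K : nat.
Local Notation panel_L2 := (panel_L2 P T).
Local Notation pdot := (pdot P T).

Lemma panel_L2_cell (F : option nat -> bool -> int -> R) :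
  panel_L2 (fun t w => F (S w) (Q w) t).
Proof. by move=> t _; exact: (Lfun_cell (fun s q => F s q t)). Qed.

Lemma panel_L2_unit {a : Omega -> R} : adm_fe P a -> panel_L2 (fun _ w => a w).
Proof. by move=> ha t _. Qed.

Lemma panel_L2_Re e : panel_L2 (Defs.Re S Q e).
Proof.
apply: (eq_panel_L2 (panel_L2_cell (fun s q t =>
  if s is Some g then ((t - g%:Z == e) && q)%:R else 0))) => t _ w.
by rewrite /Defs.Re; case: (S w).
Qed.

Lemma panel_L2_Rgl g l : panel_L2 (Rgl S Q g l).
Proof. exact: (panel_L2_cell (fun s q t => [&& s == Some g, q & t == g%:Z + l]%:R)). Qed.

Lemma panel_L2_fefit a dl et : adm_fe P a -> panel_L2 (fefit S Q a dl et).
Proof.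
move=> ha; apply: panel_L2D (panel_L2_cell (fun _ q t => et q t)).
exact: panel_L2D (panel_L2_cell (fun s _ t => dl s t)).
Qed.

Lemma panel_L2_regfit a dl et al : adm_fe P a -> panel_L2 (regfit L K S Q a dl et al).
Proof.
move=> ha; apply: panel_L2D; first exact: panel_L2_fefit.
by apply: panel_L2_sum => e _; apply: panel_L2Z; exact: panel_L2_Re.
Qed.

Lemma adm_feDZ (a a' : Omega -> R) (s : R) :
  adm_fe P a -> adm_fe P a' -> adm_fe P (fun w => a w + s * a' w).
Proof. by move=> ha ha'; apply: (LfunD (lee1n 2) ha); exact: (LfunZ (lee1n 2)). Qed.

Lemma fefitDZ a a' dl dl' et et' (s : R) :
  fefit S Q (fun w => a w + s * a' w) (fun x t => dl x t + s * dl' x t)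
    (fun q t => et q t + s * et' q t) =
  (fun t w => fefit S Q a dl et t w + s * fefit S Q a' dl' et' t w).
Proof. by apply/funext => t; apply/funext => w; rewrite /fefit; ring. Qed.

Lemma regfitDZ a a' dl dl' et et' al al' (s : R) :
  regfit L K S Q (fun w => a w + s * a' w) (fun x t => dl x t + s * dl' x t)
    (fun q t => et q t + s * et' q t) (fun e => al e + s * al' e) =
  (fun t w => regfit L K S Q a dl et al t w + s * regfit L K S Q a' dl' et' al' t w).
Proof.
apply/funext => t; apply/funext => w; rewrite /regfit fefitDZ.
rewrite (eq_bigr (fun e => al e * Defs.Re S Q e t w + s * (al' e * Defs.Re S Q e t w)))
  => [|e _]; last by ring.
by rewrite big_split /= -mulr_sumr; ring.
Qed.

Lemma pop_coef_orth {Yv : int -> Omega -> R} {al} : panel_L2 Yv ->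
  pop_coef P T L K S Q Yv al ->
  exists a dl et, adm_fe P a /\ forall a' dl' et' al', adm_fe P a' ->
    pdot (fun t w => Yv t w - regfit L K S Q a dl et al t w)
      (regfit L K S Q a' dl' et' al') = 0.
Proof.
move=> hY [a [dl [et [ha hmin]]]]; exists a, dl, et; split=> // a' dl' et' al' ha'.
apply: sqloss_min_orth => // [||s]; try exact: panel_L2_regfit.
by rewrite -regfitDZ; apply: hmin; exact: adm_feDZ.
Qed.

Lemma demeaned_L2 {Yv Yt : int -> Omega -> R} : panel_L2 Yv ->
  three_way_demeaned P T S Q Yv Yt -> panel_L2 Yt.
Proof.
move=> hY [a [dl [et [ha [_ Yt_def]]]]].
by apply: (eq_panel_L2 (panel_L2B hY (panel_L2_fefit _ _ _ ha))) => t _ w; exact: Yt_def.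
Qed.

Lemma demeaned_orth {Yv Yt : int -> Omega -> R} : panel_L2 Yv ->
  three_way_demeaned P T S Q Yv Yt ->
  forall a' dl' et', adm_fe P a' -> pdot Yt (fefit S Q a' dl' et') = 0.
Proof.
move=> hY [a [dl [et [ha [hmin Yt_def]]]]] a' dl' et' ha'.
have Yt_eq t : t \in periods T -> Yt t =1 (fun w => Yv t w - fefit S Q a dl et t w).
  by move=> _; exact: Yt_def.
rewrite (eq_pdotl _ Yt_eq).
apply: sqloss_min_orth => // [||s]; try exact: panel_L2_fefit.
by rewrite -fefitDZ; apply: hmin; exact: adm_feDZ.
Qed.

Lemma pdot_demeaned {Yv Yt Zv Zt : int -> Omega -> R} : panel_L2 Yv -> panel_L2 Zv ->
  three_way_demeaned P T S Q Yv Yt -> three_way_demeaned P T S Q Zv Zt ->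
  pdot Yt Zt = pdot Yt Zv.
Proof.
move=> hY hZ hYt [a [dl [et [ha [_ Zt_def]]]]].
have hYt2 := demeaned_L2 hY hYt; have hfe := panel_L2_fefit a dl et ha.
by rewrite (eq_pdotr _ (fun t _ => Zt_def t)) pdotBr// (demeaned_orth hY hYt) ?subr0.
Qed.

Hypothesis hwin : forall g t, g \in Gtrg Sset -> t \in periods T ->
  - (L%:Z) <= t - g%:Z <= K%:Z.

Lemma mem_evs_window g t : Some g \in Sset -> t \in periods T ->
  (t - g%:Z \in evs L K) = (t - g%:Z != -1).
Proof.
by rewrite -mem_Gtrg => hg ht; move: (hwin g t hg ht); rewrite mem_evs => /andP[-> ->].
Qed.

Definition cell_mean (Z : int -> Omega -> R) : int -> Omega -> R :=
  fun t w => condexp P S Q (Z t) (S w) (Q w).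

Lemma pdot_unitl (b : Omega -> R) (Z : int -> Omega -> R) : adm_fe P b -> panel_L2 Z ->
  pdot (fun _ w => b w) Z = mean P (fun w => b w * \sum_(t <- periods T) Z t w).
Proof.
move=> hb hZ; rewrite /pdot -mean_sum => [|t ht]; last exact: Lfun2_mul_Lfun1 (hZ t ht).
by apply: eq_mean => w; rewrite mulr_sumr.
Qed.

Lemma pdot_cell_unit_orth (X : int -> Omega -> R) (F : option nat -> bool -> int -> R)
    (a : Omega -> R) : adm_fe P a -> (forall t w, X t w = F (S w) (Q w) t - a w) ->
  (forall b, adm_fe P b -> pdot X (fun _ w => b w) = 0) ->
  exists rho : option nat -> bool -> int -> R, forall Z, panel_L2 Z ->
    pdot X Z = pdot (fun t w => rho (S w) (Q w) t) Z.
Proof.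
move=> ha X_def X_orth; have [T0|T_neq0] := eqVneq T 0%N.
  by exists F => Z _; rewrite /pdot /periods T0 !big_nil.
pose phi s q := T%:R^-1 * \sum_(t <- periods T) F s q t.
exists (fun s q t => F s q t - phi s q) => Z hZ.
pose u w := phi (S w) (Q w) - a w.
have hu : adm_fe P u by apply: (LfunB (lee1n 2)) => //; exact: Lfun_cell.
have hX : panel_L2 X.
  by apply: (eq_panel_L2 (panel_L2B (panel_L2_cell F) (panel_L2_unit ha))) => t _ w.
have sumX w : \sum_(t <- periods T) X t w = T%:R * u w.
  rewrite (eq_bigr _ (fun t _ => X_def t w)) sumrB big_const_seq count_predT.
  rewrite size_periods iter_addr addr0 /u /phi mulrBr mulrA mulfV ?pnatr_eq0//.
  by rewrite mul1r mulr_natl.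
have hZsum : adm_fe P (fun w => \sum_(t <- periods T) Z t w).
  by apply: (Lfun_sum (lee1n 2)) => t ht; exact: hZ.
(* [u] is the unit effect [(sum_t X t) / T], so [<u, Z>] is [<X, sum_t Z t> / T]. *)
have uZ : pdot (fun _ w => u w) Z = 0.
  apply: (mulfI (_ : T%:R != 0 :> R)); first by rewrite pnatr_eq0.
  rewrite mulr0 -(X_orth _ hZsum) [RHS]pdotC pdot_unitl// pdot_unitl// -meanZ.
    by apply: eq_mean => w; rewrite sumX; ring.
  exact: Lfun2_mul_Lfun1.
have X_split t : t \in periods T ->
    X t =1 (fun w => (F (S w) (Q w) t - phi (S w) (Q w)) + u w).
  by move=> _ w; rewrite X_def /u addrA subrK.
rewrite (eq_pdotl _ X_split).
have hrho := panel_L2_cell (fun s q t => F s q t - phi s q).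
by rewrite pdotC pdotDr// (pdotC Z (fun _ w => u w)) uZ addr0 pdotC.
Qed.

Lemma pdot_cell_mean (rho : option nat -> bool -> int -> R) (Z : int -> Omega -> R) :
  (forall s q, s \in Sset -> (0 < cellP P S Q s q)%E) -> panel_L2 Z ->
  pdot (fun t w => rho (S w) (Q w) t) Z = pdot (fun t w => rho (S w) (Q w) t) (cell_mean Z).
Proof.
move=> hpos hZ; apply: eq_big_seq => t ht.
have hZt := Lfun2_Lfun1 P (Z t) (hZ t ht).
exact: (mean_cellM_condexp (fun s q => rho s q t) (Z t) hpos hZt).
Qed.

(** * Demeaned event-time indicators *)

Section Demeaned_event_times.
Variable Rt : int -> int -> Omega -> R.
Hypothesis hRt : forall e, e \in evs L K ->
  three_way_demeaned P T S Q (Defs.Re S Q e) (Rt e).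

Lemma panel_L2_Rt {e} : e \in evs L K -> panel_L2 (Rt e).
Proof. by move=> he; exact: (demeaned_L2 (panel_L2_Re e) (hRt e he)). Qed.

Lemma pdot_Rt_Re i e : i \in evs L K -> e \in evs L K ->
  pdot (Rt i) (Defs.Re S Q e) = pdot (Rt i) (Rt e).
Proof.
by move=> hi he; rewrite (pdot_demeaned (panel_L2_Re i) (panel_L2_Re e) (hRt i hi) (hRt e he)).
Qed.

Lemma pdot_Rt_pop_coef (Yv : int -> Omega -> R) al i : panel_L2 Yv ->
  pop_coef P T L K S Q Yv al -> i \in evs L K ->
  pdot (Rt i) Yv = \sum_(e <- evs L K) al e * pdot (Rt i) (Rt e).
Proof.
move=> hY hal hi; have [a [dl [et [ha orth]]]] := pop_coef_orth hY hal.
have [ai [dli [eti [hai [_ Rt_def]]]]] := hRt i hi.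
have hRi := panel_L2_Rt hi; have hfit := panel_L2_regfit a dl et al ha.
have hres : panel_L2 (fun t w => Yv t w - regfit L K S Q a dl et al t w).
  exact: panel_L2B.
have Rt_regfit : pdot (Rt i) (fun t w => Yv t w - regfit L K S Q a dl et al t w) = 0.
  rewrite pdotC -(orth (fun w => - ai w) (fun s t => - dli s t) (fun q t => - eti q t)
    (fun e => (e == i)%:R)); last exact: (LfunN (lee1n 2)).
  apply: eq_pdotr => t _ w; rewrite Rt_def /regfit /fefit.
  under eq_bigr do rewrite eq_sym.
  by rewrite sum_delta_seq ?uniq_evs// hi mul1r; ring.
have -> : pdot (Rt i) Yv = pdot (Rt i) (fun t w => regfit L K S Q a dl et al t w +
    (Yv t w - regfit L K S Q a dl et al t w)).
  by apply: eq_pdotr => t _ w; rewrite addrC subrK.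
have hRe e : e \in evs L K -> panel_L2 (fun t w => al e * Defs.Re S Q e t w).
  by move=> _; exact/panel_L2Z/panel_L2_Re.
have hfe := panel_L2_fefit a dl et ha; have hsum := panel_L2_sum hRe.
rewrite pdotDr// Rt_regfit addr0 /regfit pdotDr//.
rewrite (demeaned_orth (panel_L2_Re i) (hRt i hi))// add0r pdot_sumr//.
by apply: eq_big_seq => e he; rewrite pdotZr ?pdot_Rt_Re//; exact: panel_L2_Re.
Qed.

Lemma gram_pdot (i j : 'I_(size (evs L K))) :
  gram P T L K Rt i j = pdot (Rt (nth 0 (evs L K) i)) (Rt (nth 0 (evs L K) j)).
Proof.
rewrite /gram mxE -/(mean P _) mean_sum// => t ht.
by apply: Lfun2_mul_Lfun1; apply: panel_L2_Rt => //; exact: mem_nth.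
Qed.

Lemma gram_coef_eq0 (c : int -> R) : gram P T L K Rt \in unitmx ->
  (forall i, i \in evs L K -> \sum_(e <- evs L K) c e * pdot (Rt i) (Rt e) = 0) ->
  forall j, j \in evs L K -> c j = 0.
Proof.
move=> hU hc j hj; pose v : 'cV[R]_(size (evs L K)) := \col_k c (nth 0 (evs L K) k).
have Gv : gram P T L K Rt *m v = 0.
  apply/matrixP => k z; rewrite !mxE -[RHS](hc _ (mem_nth 0 (ltn_ord k))).
  rewrite (big_nth 0) big_mkord; apply: eq_bigr => k' _.
  by rewrite gram_pdot !mxE mulrC.
have v0 : v = 0 by rewrite -(mulKmx hU v) Gv mulmx0.
have hk : (index j (evs L K) < size (evs L K))%N by rewrite index_mem.
have := congr1 (fun M : 'cV[R]_(size (evs L K)) => M (Ordinal hk) 0) v0.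
by rewrite !mxE /= nth_index.
Qed.

Lemma event_time_trend t w : None \notin Sset -> t \in periods T ->
  \sum_(e <- evs L K) (e + 1)%:~R * Defs.Re S Q e t w =
  fefit S Q (fun w => if S w is Some g then (Q w)%:R * (1 - g%:Z)%:~R else 0 : R)
    (fun _ _ => 0) (fun q t => q%:R * t%:~R) t w.
Proof.
move=> hN ht; rewrite /Defs.Re /fefit addr0; have := hS w.
case Sw: (S w) => [g|]; last by rewrite (negbTE hN).
move=> hg; under eq_bigr => e _ do rewrite -mulnb natrM mulrCA.
rewrite sum_delta_seq ?uniq_evs// mem_evs_window// -mulrDr -intrD.
have -> : 1 - g%:Z + t = t - g%:Z + 1 by lia.
by case: eqP => [->|_]; rewrite /= ?addNr ?mul0r ?mulr0 ?mul1r// mulrC.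
Qed.

(* Otherwise [event_time_trend] makes [(e + 1)_e] a null vector of the Gram matrix. *)
Lemma never_treated_mem : gram P T L K Rt \in unitmx -> None \in Sset.
Proof.
move=> hU; apply/negPn/negP => hN.
have h0 : 0 \in evs L K by rewrite mem_evs; lia.
suff /eqP : (0 + 1)%:~R = 0 :> R by rewrite add0r oner_eq0.
apply: (gram_coef_eq0 (fun e : int => (e + 1)%:~R) hU _ 0 h0) => i hi.
have hb : adm_fe P (fun w => if S w is Some g then (Q w)%:R * (1 - g%:Z)%:~R else 0 : R).
  exact: (Lfun_cell (fun s q => if s is Some g then q%:R * (1 - g%:Z)%:~R else 0)).
rewrite -[RHS](demeaned_orth (panel_L2_Re i) (hRt i hi) _ (fun _ _ => 0)
  (fun q t => q%:R * t%:~R) hb).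
have hRi := panel_L2_Rt hi.
have hRe e : e \in evs L K -> panel_L2 (fun t w => (e + 1)%:~R * Defs.Re S Q e t w).
  by move=> _; apply: panel_L2Z; exact: panel_L2_Re.
rewrite -(eq_pdotr _ (fun t ht w => event_time_trend t w hN ht)) pdot_sumr//.
by apply: eq_big_seq => e he; rewrite pdotZr ?pdot_Rt_Re//; exact: panel_L2_Re.
Qed.

Lemma pdot_Rt_cell_mean i (Z : int -> Omega -> R) :
  (forall s q, s \in Sset -> (0 < cellP P S Q s q)%E) -> i \in evs L K -> panel_L2 Z ->
  pdot (Rt i) Z = pdot (Rt i) (cell_mean Z).
Proof.
move=> hpos hi hZ; have [ai [dli [eti [hai [_ Rt_def]]]]] := hRt i hi.
have [|b hb|rho hrho] := @pdot_cell_unit_orth (Rt i)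
  (fun s q t => (if s is Some g then ((t - g%:Z == i) && q)%:R else 0) - dli s t - eti q t)
  ai hai.
- by move=> t w; rewrite Rt_def /Defs.Re /fefit; case: (S w) => [g|]; ring.
- rewrite -(demeaned_orth (panel_L2_Re i) (hRt i hi) b (fun _ _ => 0) (fun _ _ => 0) hb).
  by apply: eq_pdotr => t _ w; rewrite /fefit !addr0.
- have hmZ : panel_L2 (cell_mean Z).
    exact: (panel_L2_cell (fun s q t => condexp P S Q (Z t) s q)).
  by rewrite !hrho// pdot_cell_mean.
Qed.

(** * Potential outcomes *)

Section Potential_outcomes.
Variable Y : option nat -> int -> Omega -> R.
Hypothesis hYinf : forall t, t \in periods T -> Y None t \in Lfun P 2%:E.
Hypothesis hpos : forall s q, s \in Sset -> (0 < cellP P S Q s q)%E.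

Definition ddd_cell_mean (s : option nat) (t : int) : R :=
  let m s q := condexp P S Q (Y None t) s q in m s true - m s false - (m None true - m None false).

Section Parallel_trends.
Hypothesis hpct : DDD_PCT P T S Q Sset Y.
Hypothesis hN : None \in Sset.

Lemma ddd_cell_mean_pred s t : s \in Sset -> 2 <= t <= T%:Z ->
  ddd_cell_mean s t = ddd_cell_mean s (t - 1).
Proof.
case: s => [g hg ht|_ _]; last by rewrite /ddd_cell_mean !subrr.
have := hpct g None t; rewrite mem_Gtrg => /(_ hg hN erefl ht erefl).
have hY t' : t' \in periods T -> Y None t' \in Lfun P 1 by move=> /hYinf /Lfun2_Lfun1.
rewrite /Delta !condexpB ?hY ?mem_periods//; try lia.
by rewrite /ddd_cell_mean; lra.
Qed.

Lemma ddd_cell_mean_const s (n : nat) : s \in Sset -> (1 <= n <= T)%N ->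
  ddd_cell_mean s n = ddd_cell_mean s 1.
Proof.
move=> hs; elim: n => [//|[//|n] IH] hn.
by rewrite ddd_cell_mean_pred// (_ : _ - 1 = n.+1%:Z) ?IH//; lia.
Qed.

Lemma cell_mean_Yinf t : t \in periods T ->
  cell_mean (Y None) t =1 fefit S Q (fun w => if Q w then ddd_cell_mean (S w) 1 else 0)
    (fun s t => condexp P S Q (Y None t) s false)
    (fun q t => if q then condexp P S Q (Y None t) None true -
       condexp P S Q (Y None t) None false else 0) t.
Proof.
rewrite mem_periods => ht w; rewrite /cell_mean /fefit.
case: t ht => [n hn|//]; case: (Q w); last by rewrite add0r addr0.
rewrite -(ddd_cell_mean_const (S w) n (hS w)); last lia.
by rewrite /ddd_cell_mean; ring.
Qed.

Lemma pdot_Rt_Yinf i : i \in evs L K -> pdot (Rt i) (Y None) = 0.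
Proof.
move=> hi; rewrite pdot_Rt_cell_mean// (eq_pdotr _ cell_mean_Yinf).
apply: (demeaned_orth (panel_L2_Re i) (hRt i hi)).
exact: (Lfun_cell (fun s q => if q then ddd_cell_mean s 1 else 0)).
Qed.

End Parallel_trends.

Hypothesis hYg : forall g t, Some g \in Sset -> t \in periods T ->
  Y (Some g) t \in Lfun P 2%:E.
Hypothesis hconv : forall g t w, Some g \in Sset -> t \in periods T -> t < g%:Z ->
  Y (Some g) t w = Y None t w.

Definition Rgl_effect (g : nat) (l : int) : int -> Omega -> R :=
  fun t w => Rgl S Q g l t w * (Y (Some g) t w - Y None t w).

Lemma Lfun_treatment_effect g t : Some g \in Sset -> t \in periods T ->
  (fun w => Y (Some g) t w - Y None t w) \in Lfun P 2%:E.
Proof. by move=> hg ht; apply: (LfunB (lee1n 2)); [exact: hYg|exact: hYinf]. Qed.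

Lemma panel_L2_Rgl_effect g l : Some g \in Sset -> panel_L2 (Rgl_effect g l).
Proof.
move=> hg t ht; apply: (Lfun_cellM 2 (fun s q => [&& s == Some g, q & t == g%:Z + l]%:R)).
  by rewrite ler1n.
exact: Lfun_treatment_effect.
Qed.

Lemma cell_mean_Rgl_effect {g l} : Some g \in Sset -> forall t, t \in periods T ->
  cell_mean (Rgl_effect g l) t =1 (fun w => CATT P S Q Y g l * Rgl S Q g l t w).
Proof.
move=> hg t ht w; rewrite /cell_mean /Rgl_effect.
rewrite (condexp_cellM (fun s q => [&& s == Some g, q & t == g%:Z + l]%:R));
  last exact/Lfun2_Lfun1/Lfun_treatment_effect.
rewrite /Rgl mulrC; case: (S w =P Some g) => [->|]; case: (Q w) => //=; rewrite ?mulr0//.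
by case: eqP => [->|]; rewrite ?mulr0.
Qed.

Lemma pdot_Rt_Rgl_effect i g l : i \in evs L K -> Some g \in Sset ->
  pdot (Rt i) (Rgl_effect g l) = CATT P S Q Y g l * pdot (Rt i) (Rgl S Q g l).
Proof.
move=> hi hg; have hRi := panel_L2_Rt hi; have hRgl := panel_L2_Rgl g l.
have hE := panel_L2_Rgl_effect g l hg.
by rewrite pdot_Rt_cell_mean// (eq_pdotr _ (cell_mean_Rgl_effect hg)) pdotZr.
Qed.

Lemma Yobs_decomp t w : t \in periods T ->
  Yobs S Q Y t w = Y None t w +
    \sum_(g <- Gtrg Sset) \sum_(l <- evs L K) Rgl_effect g l t w.
Proof.
move=> ht; rewrite /Yobs /Rgl_effect /Rgl; have := hS w.
case: (S w) => [g0 hg0|_]; last first.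
  by rewrite big1 ?addr0// => g _; rewrite big1// => l _; rewrite mul0r.
case: (Q w); last first.
  by rewrite big1 ?addr0// => g _; rewrite big1// => l _; rewrite andbF mul0r.
under eq_bigr => g _.
  under eq_bigr => l _ do rewrite /= -mulnb natrM -mulrA.
  rewrite -mulr_sumr; over.
rewrite sum_delta_seq ?undup_uniq// mem_Gtrg hg0 mul1r.
under eq_bigr => l _ do rewrite addrC -subr_eq.
rewrite sum_delta_seq ?uniq_evs// mem_evs_window//.
case: eqP => [tg|_]; last by rewrite mul1r addrC subrK.
by rewrite mul0r addr0 hconv//; lia.
Qed.

Lemma panel_L2_Yobs : panel_L2 (Yobs S Q Y).
Proof.
apply: (eq_panel_L2 _ (fun t ht w => Yobs_decomp t w ht)).
apply: panel_L2D; first by move=> t; exact: hYinf.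
apply: panel_L2_sum => g hg; apply: panel_L2_sum => l _.
by apply: panel_L2_Rgl_effect; rewrite -mem_Gtrg.
Qed.

Lemma pdot_Rt_Yobs i : DDD_PCT P T S Q Sset Y -> None \in Sset -> i \in evs L K ->
  pdot (Rt i) (Yobs S Q Y) = \sum_(g <- Gtrg Sset) \sum_(l <- evs L K)
    CATT P S Q Y g l * pdot (Rt i) (Rgl S Q g l).
Proof.
move=> hpct hN hi; have hRi := panel_L2_Rt hi.
have hYn : panel_L2 (Y None) by move=> t; exact: hYinf.
have hE g : g \in Gtrg Sset -> panel_L2 (fun t w => \sum_(l <- evs L K) Rgl_effect g l t w).
  by rewrite mem_Gtrg => hg; apply: panel_L2_sum => l _; exact: panel_L2_Rgl_effect.
have hEs := panel_L2_sum hE.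
rewrite (eq_pdotr _ (fun t ht w => Yobs_decomp t w ht)) pdotDr// pdot_Rt_Yinf// add0r.
rewrite pdot_sumr//; apply: eq_big_seq => g hg; move: (hg); rewrite mem_Gtrg => hgS.
have hEg l : l \in evs L K -> panel_L2 (Rgl_effect g l) by move=> _; exact: panel_L2_Rgl_effect.
by rewrite pdot_sumr//; apply: eq_bigr => l _; rewrite pdot_Rt_Rgl_effect.
Qed.

Lemma pdot_Rt_coef_gap i (al : int -> R) (om : nat -> int -> int -> R) :
  DDD_PCT P T S Q Sset Y -> None \in Sset -> pop_coef P T L K S Q (Yobs S Q Y) al ->
  (forall g l, g \in Gtrg Sset -> l \in evs L K ->
    pop_coef P T L K S Q (Rgl S Q g l) (om g l)) -> i \in evs L K ->
  \sum_(e <- evs L K) (al e - \sum_(g <- Gtrg Sset) \sum_(l <- evs L K)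
    om g l e * CATT P S Q Y g l) * pdot (Rt i) (Rt e) = 0.
Proof.
move=> hpct hN hal hom hi; apply/eqP.
rewrite (eq_bigr _ (fun e _ => mulrBl _ _ _)) sumrB subr_eq0; apply/eqP.
rewrite -(pdot_Rt_pop_coef _ _ _ panel_L2_Yobs hal hi) pdot_Rt_Yobs//.
under [RHS]eq_bigr do rewrite mulr_suml; rewrite [RHS]exchange_big /=.
apply: eq_big_seq => g hg; under [RHS]eq_bigr do rewrite mulr_suml.
rewrite [RHS]exchange_big /=; apply: eq_big_seq => l hl.
rewrite (pdot_Rt_pop_coef _ _ _ (panel_L2_Rgl g l) (hom g l hg hl) hi) mulr_sumr.
by apply: eq_bigr => e _; rewrite mulrCA mulrA.
Qed.

End Potential_outcomes.

End Demeaned_event_times.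

End Model.

Theorem mainTheorem2
  (d : measure_display) (Omega : measurableType d) (R : realType)
  (P : probability Omega R) (T L K : nat)
  (S : Omega -> option nat) (Q : Omega -> bool)
  (Sset : seq (option nat)) (Y : option nat -> int -> Omega -> R)
  (* setup: S_i takes values in the set S, a subset of {2,...,T} u {infinity} *)
  (hSset : forall s, s \in Sset -> if s is Some g then (2 <= g <= T)%N else true)
  (hS : forall w, S w \in Sset)
  (* (S_i, Q_i) are random variables; all cells have positive probability *)
  (hcell_meas : forall s q, measurable [set w | S w = s /\ Q w = q])
  (hcell_pos : forall s q, s \in Sset -> (0 < cellP P S Q s q)%E)
  (* finite second moments of the potential outcomes *)
  (hYinf : forall t, t \in periods T -> Y None t \in Lfun P 2%:E)
  (hYg : forall g t, Some g \in Sset -> t \in periods T ->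
           Y (Some g) t \in Lfun P 2%:E)
  (* convention Y_t(g) = Y_t(infinity) for t < g *)
  (hconv : forall g t w, Some g \in Sset -> t \in periods T -> t < g%:Z ->
           Y (Some g) t w = Y None t w)
  (* the window covers all event times *)
  (hwin : forall g t, g \in Gtrg Sset -> t \in periods T ->
           - (L%:Z) <= t - g%:Z <= K%:Z)
  (* nonsingular Gram matrix of the three-way demeaned indicators *)
  (hgram : gram_nonsingular P T L K S Q)
  (* DDD parallel changes in trends *)
  (hpct : DDD_PCT P T S Q Sset Y)
  (* alpha: population coefficients of the event-study regression *)
  (al : int -> R)
  (hal : pop_coef P T L K S Q (Yobs S Q Y) al)
  (* om g l : coefficients in the regression of R_{g,l} on the same regressors,
     so that om g l j = omega^{j,*}_{g,l} *)
  (om : nat -> int -> int -> R)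
  (hom : forall g l, g \in Gtrg Sset -> l \in evs L K ->
           pop_coef P T L K S Q (Rgl S Q g l) (om g l)) :
  forall j, j \in evs L K ->
    al j = \sum_(g <- Gtrg Sset) \sum_(l <- evs L K) om g l j * CATT P S Q Y g l.
Proof.
have [Rt [hRt hU]] := hgram.
have hN : None \in Sset by apply: never_treated_mem hU.
suff gap0 : forall j, j \in evs L K ->
    al j - \sum_(g <- Gtrg Sset) \sum_(l <- evs L K) om g l j * CATT P S Q Y g l = 0.
  by move=> j /gap0/eqP; rewrite subr_eq0 => /eqP.
apply: gram_coef_eq0 hU _ => // i hi.
exact: pdot_Rt_coef_gap.
Qed.
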